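(* Let $X$ be the Markov chain on $\mathbf{Z}^+=\{0,1,2,\dots\}$ with $X_0=0$ and transition probabilities defined as follows: for $n\ge0$ and $2^n-1\le k\le 2^{n+1}-2$, $p_{k,k}=1/2$, $p_{k,2^{n+1}}=\dfrac{1}{(2^{n+1}-k)\ln(n+e^2)}$, $p_{k,k+1}=1/2-p_{k,2^{n+1}}$. Then the jumps $\xi(k)$ are uniformly integrable and converge weakly as $k\to\infty$ to the Bernoulli distribution with $\mathbf{P}\{\xi=0\}=\mathbf{P}\{\xi=1\}=1/2$ (so $1/\mathbf{E}\xi=2$), but the renewal measure $U\{k\}=\sum_{m\ge0}\mathbf{P}\{X_m=k\}$ does not converge to $2$ as $k\to\infty$.
   Context: $\xi(k)$ denotes a random variable with $\mathbf{P}\{k+\xi(k)=j\}=p_{k,j}$. Note $p_{k,2^{n+1}}\le1/2$, so the transition probabilities are well defined. *)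

From Stdlib Require Import Reals Lra Arith.
Open Scope R_scope.

(* Block index: the unique n with 2^n - 1 <= k <= 2^(n+1) - 2, i.e. log2 (k+1). *)
Definition blk (k : nat) : nat := Nat.log2 (S k).

Definition qjump (k : nat) : R :=
  / ((INR (2 ^ S (blk k)) - INR k) * ln (INR (blk k) + exp 2)).

Definition p (k j : nat) : R :=
  if Nat.eq_dec j k then 1/2
  else if Nat.eq_dec j (2 ^ S (blk k)) then qjump k
  else if Nat.eq_dec j (S k) then 1/2 - qjump k
  else 0.

(* distX m j = P{X_m = j} for the chain started at X_0 = 0.
   Chapman-Kolmogorov; the sum over i is restricted to i <= j since
   p i j = 0 whenever i > j (the chain never moves down). *)
Fixpoint distX (m j : nat) : R :=
  match m with
  | O => if Nat.eq_dec j 0 then 1 else 0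
  | S m' => sum_f_R0 (fun i => distX m' i * p i j) j
  end.

(* E f(xi(k)) = l, where P{k + xi(k) = j} = p_{k,j} *)
Definition jump_expect (k : nat) (f : R -> R) (l : R) : Prop :=
  infinite_sum (fun j => p k j * f (INR j - INR k)) l.

Definition jumps_weak_cv_bernoulli : Prop :=
  forall f : R -> R, continuity f -> (exists B, forall x, Rabs (f x) <= B) ->
    forall L : nat -> R, (forall k, jump_expect k f (L k)) ->
      Un_cv L (f 0 / 2 + f 1 / 2).

(* uniform integrability: sup_k E[|xi(k)| ; |xi(k)| > M] -> 0 as M -> oo *)
Definition tail_part (M : R) (x : R) : R :=
  if Rlt_dec M (Rabs x) then Rabs x else 0.

Definition jumps_unif_integrable : Prop :=
  forall eps, eps > 0 -> exists M0 : R, forall M, M >= M0 ->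
    forall k l, jump_expect k (tail_part M) l -> l < eps.

Definition renewal_measure_is (U : nat -> R) : Prop :=
  forall k, infinite_sum (fun m => distX m k) (U k).

(* The state space splits into blocks [2^n - 1, 2^(n+1) - 2]; from k
   in block n the chain stays w.p. 1/2, steps to k+1 w.p. 1/2 - q_k and jumps
   to 2^(n+1) w.p. q_k = 1 / (D_k lnfac n), where D_k = 2^(n+1) - k is the jump
   length and lnfac n = ln (n + e^2) grows slowly.

   - Jump law: E f(xi(k)) = f(0)/2 + q_k f(D_k) + (1/2 - q_k) f(1).  Since
     q_k D_k = 1/lnfac n -> 0 and q_k <= 1/lnfac n, this gives uniform
     integrability and weak convergence to Bernoulli(1/2).
   - Finiteness of U{k}: the chain never moves down and stays with probability
     1/2, so partial renewal sums at k are bounded by those below k.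
   - Non-convergence: inside block n the point k+1 is entered only from k, so
     U{k+1} = 2 p_{k,k+1} U{k} = (1 - 2 q_k) U{k}.  Across the block the factors
     multiply to at most 1 / (1 + sum 2 q_k), and sum 2 q_k >= n / lnfac n by
     H(2^n) >= 1 + n/2; this is >= 2 for n >= 16, contradicting U -> 2. *)

From Stdlib Require Import Reals Lra Lia.
Open Scope R_scope.

Definition lnfac (n : nat) : R := ln (INR n + exp 2).

Lemma exp_lnfac n : exp (lnfac n) = INR n + exp 2.
Proof. apply exp_ln. pose proof (pos_INR n); pose proof (exp_pos 2); lra. Qed.

(* lnfac n >= ln (e^2) = 2; keeps all probabilities in range. *)
Lemma lnfac_ge2 n : 2 <= lnfac n.
Proof.
  apply Rnot_lt_le; intros Hlt.
  pose proof (exp_increasing _ _ Hlt) as Hexp.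
  rewrite exp_lnfac in Hexp. pose proof (pos_INR n); lra.
Qed.

Lemma inv_lnfac_le_half n : / lnfac n <= 1/2.
Proof.
  pose proof (lnfac_ge2 n). replace (1/2) with (/2) by field.
  apply Rinv_le_contravar; lra.
Qed.

Lemma inv_lnfac_small eps : eps > 0 -> exists N, forall n, (N <= n)%nat -> / lnfac n < eps.
Proof.
  intros Heps. destruct (INR_unbounded (exp (/ eps))) as [N HN].
  exists N; intros n Hn.
  assert (Hbig : / eps < lnfac n).
  { apply le_INR in Hn. rewrite <- (ln_exp (/ eps)). apply ln_increasing.
    - apply exp_pos.
    - pose proof (exp_pos 2); lra. }
  rewrite <- (Rinv_inv eps). apply Rinv_lt_contravar; [|exact Hbig].
  pose proof (Rinv_0_lt_compat eps Heps). pose proof (lnfac_ge2 n). nra.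
Qed.

(* lnfac grows slower than n: from e^(L/2) >= 1 + L/2 we get (1 + L/2)^2 <= n + 9. *)
Lemma lnfac_le_half n : (16 <= n)%nat -> 2 * lnfac n <= INR n.
Proof.
  intros Hn. pose proof (lnfac_ge2 n) as HL2.
  set (L := lnfac n) in *.
  assert (Hsq : (1 + L / 2) * (1 + L / 2) < INR n + exp 2).
  { rewrite <- (exp_lnfac n). fold L.
    assert (Ehalf : exp L = exp (L / 2) * exp (L / 2)) by (rewrite <- exp_plus; f_equal; field).
    pose proof (exp_ineq1 (L / 2) ltac:(lra)). nra. }
  assert (He2 : exp 2 <= 9).
  { replace 2 with (1 + 1) by ring. rewrite exp_plus.
    pose proof exp_le_3; pose proof (exp_pos 1); nra. }
  assert (H16 : 16 <= INR n) by (replace 16 with (INR 16) by (simpl; lra); apply le_INR; lia).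
  nra.
Qed.

Lemma blk_spec k : (2 ^ blk k <= S k < 2 ^ S (blk k))%nat.
Proof. apply Nat.log2_spec. lia. Qed.

Lemma blk_shift n d : (S d < 2 ^ n)%nat -> blk (2 ^ n + d) = n.
Proof.
  intros Hd. apply Nat.log2_unique; [lia|].
  rewrite Nat.pow_succ_r'. lia.
Qed.

Lemma blk_ge n k : (2 ^ n <= k)%nat -> (n <= blk k)%nat.
Proof.
  intros Hk. rewrite <- (Nat.log2_pow2 n) by lia.
  apply Nat.log2_le_mono. lia.
Qed.

Definition jump_len (k : nat) : R := INR (2 ^ S (blk k)) - INR k.

Lemma jump_len_bounds k : 2 <= jump_len k <= INR (2 ^ blk k) + 1.
Proof.
  pose proof (blk_spec k) as Hb. unfold jump_len.
  assert (Hlo : (k + 2 <= 2 ^ S (blk k))%nat) by lia.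
  assert (Hhi : (2 ^ S (blk k) <= 2 ^ blk k + k + 1)%nat) by (rewrite Nat.pow_succ_r'; lia).
  apply le_INR in Hlo, Hhi. rewrite plus_INR in Hlo. rewrite !plus_INR in Hhi. simpl (INR 1) in Hhi.
  replace (INR 2) with 2 in Hlo by (simpl; lra). lra.
Qed.

Lemma qjump_eq k : qjump k = / (jump_len k * lnfac (blk k)).
Proof. reflexivity. Qed.

Lemma qjump_bounds k : 0 <= qjump k /\ 2 * qjump k <= / lnfac (blk k).
Proof.
  rewrite qjump_eq. pose proof (jump_len_bounds k). pose proof (lnfac_ge2 (blk k)).
  split.
  - left. apply Rinv_0_lt_compat. nra.
  - replace (2 * / (jump_len k * lnfac (blk k))) with (/ (jump_len k / 2 * lnfac (blk k)))
      by (field; lra).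
    apply Rinv_le_contravar; nra.
Qed.

Lemma qjump_mul_len k : qjump k * jump_len k = / lnfac (blk k).
Proof.
  rewrite qjump_eq. pose proof (jump_len_bounds k). pose proof (lnfac_ge2 (blk k)).
  field. lra.
Qed.

Lemma p_bounds k j : 0 <= p k j <= 1.
Proof.
  pose proof (qjump_bounds k). pose proof (inv_lnfac_le_half (blk k)). unfold p.
  destruct (Nat.eq_dec j k); [lra|].
  destruct (Nat.eq_dec j _); [lra|].
  destruct (Nat.eq_dec j _); lra.
Qed.

Lemma p_diag k : p k k = 1/2.
Proof. unfold p. destruct (Nat.eq_dec k k); congruence. Qed.

Lemma p_succ k : p k (S k) = 1/2 - qjump k.
Proof.
  pose proof (blk_spec k). unfold p.
  destruct (Nat.eq_dec (S k) k); [lia|].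
  destruct (Nat.eq_dec (S k) _); [lia|].
  destruct (Nat.eq_dec (S k) (S k)); congruence.
Qed.

Lemma p_jump k : p k (2 ^ S (blk k))%nat = qjump k.
Proof.
  pose proof (blk_spec k). unfold p.
  destruct (Nat.eq_dec _ k); [lia|].
  destruct (Nat.eq_dec _ _); congruence.
Qed.

Lemma p_other k j : j <> k -> j <> S k -> j <> (2 ^ S (blk k))%nat -> p k j = 0.
Proof.
  intros H1 H2 H3. unfold p.
  destruct (Nat.eq_dec j k); [congruence|].
  destruct (Nat.eq_dec j _); [congruence|].
  destruct (Nat.eq_dec j (S k)); congruence.
Qed.

Definition indicator (t j : nat) (c : R) : R := if Nat.eq_dec j t then c else 0.

Lemma sum_indicator t c N : (t <= N)%nat -> sum_f_R0 (fun j => indicator t j c) N = c.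
Proof.
  induction N as [|N IH]; intros Ht; unfold indicator in *.
  - replace t with 0%nat by lia. reflexivity.
  - rewrite tech5. destruct (Nat.eq_dec (S N) t) as [<-|Hne].
    + rewrite sum_eq_R0; [ring|]. intros m Hm. destruct (Nat.eq_dec m (S N)); [lia|auto].
    + rewrite IH by lia. ring.
Qed.

Lemma infinite_sum_eventually_const s c N0 :
  (forall n, (N0 <= n)%nat -> sum_f_R0 s n = c) -> infinite_sum s c.
Proof.
  intros Hs eps Heps. exists N0. intros n Hn.
  rewrite Hs by exact Hn. rewrite Rdist_eq. lra.
Qed.

Lemma jump_expect_formula k f l : jump_expect k f l ->
  l = f 0 / 2 + qjump k * f (jump_len k) + (1/2 - qjump k) * f 1.
Proof.
  intros Hl. pose proof (blk_spec k) as Hb.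
  set (T := (2 ^ S (blk k))%nat) in *.
  assert (Hterm : forall j, p k j * f (INR j - INR k) =
    indicator k j (f 0 / 2) + indicator T j (qjump k * f (jump_len k))
    + indicator (S k) j ((1/2 - qjump k) * f 1)).
  { intros j. unfold indicator.
    destruct (Nat.eq_dec j k) as [->|Hk].
    - rewrite p_diag, Rminus_diag.
      destruct (Nat.eq_dec k T); [lia|]. destruct (Nat.eq_dec k (S k)); [lia|]. lra.
    - destruct (Nat.eq_dec j T) as [->|HT].
      + rewrite p_jump. destruct (Nat.eq_dec T (S k)); [lia|]. unfold jump_len; fold T; ring.
      + destruct (Nat.eq_dec j (S k)) as [->|HS].
        * rewrite p_succ, S_INR. replace (INR k + 1 - INR k) with 1 by ring. ring.
        * rewrite p_other by assumption. ring. }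
  eapply uniqueness_sum; [exact Hl|].
  apply infinite_sum_eventually_const with T. intros n Hn.
  rewrite (sum_eq _ _ n (fun j _ => Hterm j)), !plus_sum, !sum_indicator by lia.
  reflexivity.
Qed.

Lemma tail_part_small M x : 0 <= M -> Rabs x <= M -> tail_part M x = 0.
Proof. intros. unfold tail_part. destruct (Rlt_dec M (Rabs x)); [lra|reflexivity]. Qed.

(* Only the long jump can exceed a level M >= 1, and it does so only in blocks
   of index larger than log2 M, where its contribution is 1 / lnfac (blk k). *)
Lemma jumps_uniformly_integrable : jumps_unif_integrable.
Proof.
  intros eps Heps. destruct (inv_lnfac_small eps Heps) as [N HN].
  exists (INR (2 ^ N) + 1). intros M HM k l Hl.
  rewrite (jump_expect_formula k _ l Hl).
  pose proof (pos_INR (2 ^ N)).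
  rewrite (tail_part_small M 0), (tail_part_small M 1)
    by (rewrite ?Rabs_R0, ?Rabs_R1; lra).
  pose proof (jump_len_bounds k) as [HD2 HDb].
  unfold tail_part. destruct (Rlt_dec M (Rabs (jump_len k))) as [Hlong|]; [|lra].
  rewrite Rabs_right in * by lra.
  assert (HNb : (N < blk k)%nat).
  { apply (Nat.pow_lt_mono_r_iff 2); [lia|]. apply INR_lt. lra. }
  rewrite qjump_mul_len. specialize (HN (blk k) ltac:(lia)). lra.
Qed.

(* E f(xi(k)) differs from the Bernoulli mean by qjump k * (f(jump_len k) - f 1),
   and qjump k <= 1 / lnfac (blk k) -> 0. *)
Lemma jumps_weakly_converge : jumps_weak_cv_bernoulli.
Proof.
  intros f _ [B HB] L HL eps Heps.
  assert (HB0 : 0 <= B) by (pose proof (HB 0); pose proof (Rabs_pos (f 0)); lra).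
  destruct (inv_lnfac_small (eps / (2 * B + 2))) as [N HN].
  { apply Rdiv_lt_0_compat; lra. }
  exists (2 ^ N)%nat. intros k Hk.
  rewrite (jump_expect_formula k f (L k) (HL k)). unfold Rdist.
  replace (f 0 / 2 + qjump k * f (jump_len k) + (1/2 - qjump k) * f 1 - (f 0 / 2 + f 1 / 2))
    with (qjump k * (f (jump_len k) - f 1)) by field.
  pose proof (qjump_bounds k) as [Hq0 Hq]. pose proof (lnfac_ge2 (blk k)).
  specialize (HN (blk k) (blk_ge N k Hk)).
  assert (Hdiff : Rabs (f (jump_len k) - f 1) <= 2 * B).
  { unfold Rminus. pose proof (Rabs_triang (f (jump_len k)) (- f 1)). rewrite Rabs_Ropp in *.
    pose proof (HB (jump_len k)). pose proof (HB 1). lra. }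
  rewrite Rabs_mult, (Rabs_right (qjump k)) by lra.
  assert (Hscale : eps / (2 * B + 2) * (2 * B + 2) = eps) by (field; lra).
  pose proof (Rabs_pos (f (jump_len k) - f 1)). nra.
Qed.

Lemma distX_nonneg m j : 0 <= distX m j.
Proof.
  revert j; induction m as [|m IH]; intros j; simpl.
  - destruct (Nat.eq_dec j 0); lra.
  - apply cond_pos_sum. intros i. apply Rmult_le_pos; [apply IH|apply p_bounds].
Qed.

Lemma distX0_le1 j : distX 0 j <= 1.
Proof. simpl. destruct (Nat.eq_dec j 0); lra. Qed.

Definition renewal_upto (M j : nat) : R := sum_f_R0 (fun m => distX m j) M.

Lemma sum_f_R0_swap (a : nat -> nat -> R) M J :
  sum_f_R0 (fun m => sum_f_R0 (fun i => a m i) J) M =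
  sum_f_R0 (fun i => sum_f_R0 (fun m => a m i) M) J.
Proof.
  induction M as [|M IH]; [reflexivity|].
  rewrite tech5, IH, <- plus_sum. apply sum_eq. intros i _. rewrite tech5. reflexivity.
Qed.

Lemma renewal_upto_succ M j :
  renewal_upto (S M) j = distX 0 j + sum_f_R0 (fun i => renewal_upto M i * p i j) j.
Proof.
  unfold renewal_upto. rewrite decomp_sum by lia. simpl pred. f_equal.
  change (sum_f_R0 (fun m => sum_f_R0 (fun i => distX m i * p i j) j) M =
          sum_f_R0 (fun i => sum_f_R0 (fun m => distX m i) M * p i j) j).
  rewrite sum_f_R0_swap. apply sum_eq. intros i _. rewrite Rmult_comm, scal_sum. reflexivity.
Qed.

Lemma renewal_upto_nonneg M j : 0 <= renewal_upto M j.
Proof. apply cond_pos_sum. intros; apply distX_nonneg. Qed.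

Lemma renewal_upto_mono M j : renewal_upto M j <= renewal_upto (S M) j.
Proof. unfold renewal_upto. rewrite tech5. pose proof (distX_nonneg (S M) j). lra. Qed.

(* Since p j j = 1/2, the mass at j is at most twice what enters from below:
   renewal_upto M j <= 2 (1 + sum_{i<j} renewal_upto M i), uniformly in M. *)
Lemma renewal_upto_bounded j : exists C, forall i M, (i <= j)%nat -> renewal_upto M i <= C.
Proof.
  induction j as [|j [C HC]].
  - exists 2. intros i M Hi. replace i with 0%nat by lia.
    pose proof (renewal_upto_mono M 0) as Hmono.
    rewrite renewal_upto_succ in Hmono. simpl sum_f_R0 in Hmono.
    rewrite p_diag in Hmono. pose proof (distX0_le1 0). lra.
  - assert (HC0 : 0 <= C).
    { pose proof (HC 0%nat 0%nat ltac:(lia)). pose proof (renewal_upto_nonneg 0 0). lra. }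
    exists (Rmax C (2 + 2 * C * INR (S j))). intros i M Hi.
    destruct (Nat.eq_dec i (S j)) as [->|Hne].
    2: { apply Rle_trans with C; [apply HC; lia|apply Rmax_l]. }
    apply Rle_trans with (2 + 2 * C * INR (S j)); [|apply Rmax_r].
    pose proof (renewal_upto_mono M (S j)) as Hmono.
    rewrite renewal_upto_succ, tech5, p_diag in Hmono.
    assert (Hbelow : sum_f_R0 (fun i => renewal_upto M i * p i (S j)) j
                     <= sum_f_R0 (fun _ => C) j).
    { apply sum_Rle. intros i Hij. pose proof (p_bounds i (S j)).
      pose proof (renewal_upto_nonneg M i). pose proof (HC i M Hij). nra. }
    rewrite sum_cte in Hbelow. pose proof (distX0_le1 (S j)). lra.
Qed.

Lemma renewal_finite k : exists u, infinite_sum (fun m => distX m k) u.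
Proof.
  destruct (renewal_upto_bounded k) as [C HC].
  destruct (growing_cv (fun M => renewal_upto M k)) as [u Hu].
  - intros M. apply renewal_upto_mono.
  - exists C. intros x [M ->]. apply HC. lia.
  - exists u. exact Hu.
Qed.

Lemma not_pow2_between n m j : (2 ^ n < j < 2 ^ S n)%nat -> j <> (2 ^ m)%nat.
Proof.
  intros Hj ->. destruct (Nat.le_gt_cases m n) as [Hm|Hm].
  - pose proof (Nat.pow_le_mono_r 2 m n ltac:(lia) Hm). lia.
  - pose proof (Nat.pow_le_mono_r 2 (S n) m ltac:(lia) Hm). lia.
Qed.

Lemma p_into_block n i j : (S i < j)%nat -> (2 ^ n < j < 2 ^ S n)%nat -> p i j = 0.
Proof.
  intros Hij Hj. apply p_other; [lia|lia|].
  exact (not_pow2_between n (S (blk i)) j Hj).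
Qed.

Lemma sum_f_R0_last_two (g : nat -> R) k :
  (forall i, (i < k)%nat -> g i = 0) -> sum_f_R0 g (S k) = g k + g (S k).
Proof.
  intros Hg. rewrite tech5. destruct k as [|k]; [reflexivity|].
  rewrite tech5, sum_eq_R0 by (intros i Hi; apply Hg; lia). ring.
Qed.

Lemma distX_block_step n k m : (2 ^ n < S k < 2 ^ S n)%nat ->
  distX (S m) (S k) = p k (S k) * distX m k + distX m (S k) / 2.
Proof.
  intros Hk.
  change (distX (S m) (S k)) with (sum_f_R0 (fun i => distX m i * p i (S k)) (S k)).
  rewrite sum_f_R0_last_two by (intros i Hi; rewrite (p_into_block n i (S k)) by lia; ring).
  rewrite p_diag. field.
Qed.

Lemma series_halving_recurrence (s t : nat -> R) (c ls lt : R) :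
  infinite_sum s ls -> infinite_sum t lt -> s 0%nat = 0 ->
  (forall m, s (S m) = c * t m + s m / 2) -> ls = 2 * c * lt.
Proof.
  intros Hs Ht Hs0 Hrec.
  assert (Hpartial : forall M, sum_f_R0 s (S M) = c * sum_f_R0 t M + / 2 * sum_f_R0 s M).
  { intros M. rewrite decomp_sum, Hs0 by lia. simpl pred.
    rewrite (sum_eq _ _ M (fun m _ => Hrec m)), plus_sum, !scal_sum.
    unfold Rdiv. rewrite (sum_eq (fun i => t i * c) (fun i => c * t i)) by (intros; ring). ring. }
  assert (Hshift : Un_cv (fun M => sum_f_R0 s (M + 1)) ls) by exact (CV_shift' _ 1 _ Hs).
  assert (Hlim : Un_cv (fun M => sum_f_R0 s (M + 1)) (c * lt + / 2 * ls)).
  { apply Un_cv_ext with (fun M => c * sum_f_R0 t M + / 2 * sum_f_R0 s M).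
    - intros M. rewrite Nat.add_1_r. symmetry. apply Hpartial.
    - apply CV_plus; apply CV_mult; try assumption; intros eps Heps; exists 0%nat;
        intros; rewrite Rdist_eq; lra. }
  pose proof (UL_sequence _ _ _ Hshift Hlim). lra.
Qed.

Lemma renewal_nonneg U k : renewal_measure_is U -> 0 <= U k.
Proof.
  intros HU. apply (@Rle_cv_lim (fun _ => 0) (sum_f_R0 (fun m => distX m k)) 0 (U k)).
  - intros M. apply cond_pos_sum. intros; apply distX_nonneg.
  - intros eps Heps. exists 0%nat. intros. rewrite Rdist_eq. lra.
  - exact (HU k).
Qed.

(* Damping rate 2 q_k of the unit step from k = 2^n + d inside block n. *)
Definition block_rate (n d : nat) : R := 2 / ((INR (2 ^ n) - INR d) * lnfac n).

(* Within block n, each unit step multiplies the renewal measure by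
   2 p_{k,k+1} = 1 - 2 q_k. *)
Lemma renewal_block_step U n d : renewal_measure_is U -> (S d < 2 ^ n)%nat ->
  U (2 ^ n + S d)%nat = (1 - block_rate n d) * U (2 ^ n + d)%nat.
Proof.
  intros HU Hd. set (k := (2 ^ n + d)%nat).
  replace (2 ^ n + S d)%nat with (S k) by (unfold k; lia).
  rewrite (series_halving_recurrence _ _ (p k (S k)) _ _ (HU (S k)) (HU k)).
  - rewrite p_succ, qjump_eq. unfold block_rate, jump_len, k. rewrite blk_shift by lia.
    replace (INR (2 ^ S n) - INR (2 ^ n + d)) with (INR (2 ^ n) - INR d)
      by (rewrite Nat.pow_succ_r', mult_INR, plus_INR; simpl; ring).
    assert (Hgap : INR d < INR (2 ^ n)) by (apply lt_INR; lia).
    pose proof (lnfac_ge2 n). field. split; lra.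
  - simpl. destruct (Nat.eq_dec (S k) 0); [lia|reflexivity].
  - intros m. apply (distX_block_step n). rewrite Nat.pow_succ_r'. unfold k. lia.
Qed.

Lemma block_rate_bounds n d : (S d < 2 ^ n)%nat -> 0 <= block_rate n d <= 1.
Proof.
  intros Hd. pose proof (lnfac_ge2 n). unfold block_rate.
  assert (Hgap : 2 <= INR (2 ^ n) - INR d).
  { assert (H2 : (d + 2 <= 2 ^ n)%nat) by lia. apply le_INR in H2.
    rewrite plus_INR in H2. simpl (INR 2) in H2. lra. }
  split.
  - left. apply Rdiv_lt_0_compat; nra.
  - apply (Rmult_le_reg_r ((INR (2 ^ n) - INR d) * lnfac n)); [nra|].
    unfold Rdiv. rewrite Rmult_assoc, Rinv_l by nra. nra.
Qed.

Fixpoint psum (x : nat -> R) (d : nat) : R :=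
  match d with O => 0 | S d' => psum x d' + x d' end.

Lemma psum_scal c x y d : (forall i, y i = c * x i) -> psum y d = c * psum x d.
Proof. intros Hy. induction d as [|d IH]; simpl; [ring|rewrite IH, Hy; ring]. Qed.

Lemma damped_sequence_bound (u x : nat -> R) D : 0 <= u 0%nat ->
  (forall d, (d < D)%nat -> 0 <= x d <= 1 /\ u (S d) = (1 - x d) * u d) ->
  u D * (1 + psum x D) <= u 0%nat.
Proof.
  intros Hu0 Hstep.
  enough (Hinv : 0 <= u D /\ 0 <= psum x D /\ u D * (1 + psum x D) <= u 0%nat) by apply Hinv.
  induction D as [|D IH]; simpl; [lra|].
  destruct IH as (HuD & Hs & Hbound); [intros d Hd; apply Hstep; lia|].
  destruct (Hstep D ltac:(lia)) as [Hx ->].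
  set (s := psum x D) in *.
  assert (Hdrop : 0 <= u D * x D * (s + x D)) by (apply Rmult_le_pos; [apply Rmult_le_pos|]; lra).
  repeat split; nra.
Qed.

Definition harmonic (a : nat) : R := psum (fun i => / INR (S i)) a.

Lemma harmonic_S a : harmonic (S a) = harmonic a + / INR (S a).
Proof. reflexivity. Qed.

Lemma psum_reciprocal_tail a b : (b <= a)%nat ->
  psum (fun d => / (INR a - INR d)) b = harmonic a - harmonic (a - b).
Proof.
  induction b as [|b IH]; intros Hb; simpl psum.
  - rewrite Nat.sub_0_r. ring.
  - rewrite IH by lia.
    replace (a - b)%nat with (S (a - S b)) by lia. rewrite harmonic_S.
    replace (S (a - S b)) with (a - b)%nat by lia. rewrite minus_INR by lia. ring.
Qed.

(* H(a+b) - H(a) >= b / (a+b): each of the b added terms is >= 1/(a+b). *)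
Lemma harmonic_add a b : (1 <= a)%nat -> INR b / INR (a + b) <= harmonic (a + b) - harmonic a.
Proof.
  intros Ha. induction b as [|b IH].
  - rewrite Nat.add_0_r. unfold Rdiv. simpl. lra.
  - replace (a + S b)%nat with (S (a + b)) by lia. rewrite harmonic_S, !S_INR.
    assert (HA : 1 <= INR (a + b)) by (apply (le_INR 1); lia).
    pose proof (pos_INR b).
    assert (Hshrink : INR b / (INR (a + b) + 1) <= INR b / INR (a + b)).
    { apply Rmult_le_compat_l; [lra|]. apply Rinv_le_contravar; lra. }
    replace ((INR b + 1) / (INR (a + b) + 1))
      with (INR b / (INR (a + b) + 1) + / (INR (a + b) + 1)) by (field; lra).
    lra.
Qed.

(* Doubling adds at least 1/2: H(2^n) >= 1 + n/2. *)
Lemma harmonic_pow2 n : 1 + INR n / 2 <= harmonic (2 ^ n).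
Proof.
  induction n as [|n IH].
  - simpl. unfold harmonic; simpl. lra.
  - assert (Hpos : (1 <= 2 ^ n)%nat) by (apply (Nat.pow_le_mono_r 2 0 n); lia).
    pose proof (harmonic_add _ (2 ^ n) Hpos) as Hdouble.
    replace (2 ^ S n)%nat with (2 ^ n + 2 ^ n)%nat by (rewrite Nat.pow_succ_r'; lia).
    rewrite plus_INR in Hdouble.
    replace (INR (2 ^ n) / (INR (2 ^ n) + INR (2 ^ n))) with (1/2) in Hdouble
      by (pose proof (le_INR _ _ Hpos); simpl in *; field; lra).
    rewrite S_INR. lra.
Qed.

(* The total damping across block n: sum_{d < 2^n - 1} 2 q = (2 / lnfac n) (H(2^n) - 1)
   >= n / lnfac n. *)
Lemma block_rate_sum n : INR n / lnfac n <= psum (block_rate n) (2 ^ n - 1).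
Proof.
  pose proof (lnfac_ge2 n).
  rewrite (psum_scal (2 / lnfac n) (fun d => / (INR (2 ^ n) - INR d)))
    by (intros d; unfold block_rate, Rdiv; rewrite Rinv_mult; ring).
  assert (Hpos : (1 <= 2 ^ n)%nat) by (apply (Nat.pow_le_mono_r 2 0 n); lia).
  rewrite psum_reciprocal_tail by lia.
  replace (2 ^ n - (2 ^ n - 1))%nat with 1%nat by lia.
  replace (harmonic 1) with 1 by (unfold harmonic; simpl; field).
  pose proof (harmonic_pow2 n).
  replace (INR n / lnfac n) with (2 / lnfac n * (INR n / 2)) by (field; lra).
  apply Rmult_le_compat_l; [left; apply Rdiv_lt_0_compat|]; lra.
Qed.

Lemma renewal_block_decay U n : renewal_measure_is U ->
  U (2 ^ n + (2 ^ n - 1))%nat * (1 + INR n / lnfac n) <= U (2 ^ n)%nat.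
Proof.
  intros HU.
  assert (Hsteps : forall d, (d < 2 ^ n - 1)%nat -> 0 <= block_rate n d <= 1 /\
      U (2 ^ n + S d)%nat = (1 - block_rate n d) * U (2 ^ n + d)%nat).
  { intros d Hd. split; [apply block_rate_bounds; lia|apply renewal_block_step; [exact HU|lia]]. }
  pose proof (damped_sequence_bound (fun d => U (2 ^ n + d)%nat) (block_rate n) (2 ^ n - 1)
    (renewal_nonneg U (2 ^ n + 0) HU) Hsteps) as Hdecay.
  cbv beta in Hdecay. rewrite Nat.add_0_r in Hdecay.
  pose proof (block_rate_sum n). pose proof (renewal_nonneg U (2 ^ n + (2 ^ n - 1)) HU).
  nra.
Qed.

(* If U converged to 2, then U(2^n) < 3 and U(2^(n+1) - 1) > 1 for large n,
   while crossing block n divides U by 1 + n / lnfac n >= 3 once n >= 16. *)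
Lemma renewal_not_cv U : renewal_measure_is U -> ~ Un_cv U 2.
Proof.
  intros HU Hcv. destruct (Hcv 1 ltac:(lra)) as [N HN].
  assert (Hnear : forall j, (N <= j)%nat -> 1 < U j < 3).
  { intros j Hj. specialize (HN j Hj). unfold Rdist in HN. apply Rabs_def2 in HN. lra. }
  set (n := Nat.max N 16).
  assert (Hbig : (n < 2 ^ n)%nat) by (apply Nat.pow_gt_lin_r; lia).
  pose proof (Hnear (2 ^ n)%nat ltac:(lia)) as Hstart.
  pose proof (Hnear (2 ^ n + (2 ^ n - 1))%nat ltac:(lia)) as Hend.
  pose proof (renewal_block_decay U n HU) as Hdecay.
  pose proof (lnfac_le_half n ltac:(lia)). pose proof (lnfac_ge2 n).
  assert (Hratio : 2 <= INR n / lnfac n).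
  { apply (Rmult_le_reg_r (lnfac n)); [lra|]. unfold Rdiv.
    rewrite Rmult_assoc, Rinv_l by lra. lra. }
  nra.
Qed.

Theorem mainTheorem6 :
  jumps_unif_integrable /\
  jumps_weak_cv_bernoulli /\
  (forall k, exists u, infinite_sum (fun m => distX m k) u) /\
  (forall U : nat -> R, renewal_measure_is U -> ~ Un_cv U 2).
Proof.
  split; [exact jumps_uniformly_integrable|].
  split; [exact jumps_weakly_converge|].
  split; [exact renewal_finite|exact renewal_not_cv].
Qed.
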